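(* Let $R\in C^1(\mathbb{R}^3;SO(3))$ be such that $\operatorname{curl}R=\alpha$ on $\mathbb{R}^3$ for some constant $\alpha\in\mathbb{R}^{3\times3}$. Then $\alpha=0$ and $R$ is constant.
   Context: $SO(3)$ is the group of $3\times3$ rotation matrices. For a matrix field $R$, $\operatorname{curl}$ is applied row-wise: $(\operatorname{curl}R)_{ij}=\varepsilon_{jkl}\partial_kR_{il}$ (Einstein summation, $\varepsilon_{jkl}$ the sign of the permutation $(jkl)$). *)

From HB Require Import structures.
From mathcomp Require Import all_boot all_order all_algebra.
From mathcomp Require Import all_classical all_reals all_analysis.
Set Implicit Arguments. Unset Strict Implicit. Unset Printing Implicit Defensive.
Import Order.TTheory GRing.Theory Num.Theory.
Import numFieldNormedType.Exports.
Local Open Scope ring_scope.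

(* The space R^3 is modelled as row vectors 'rV[R]_3; e_k = delta_mx 0 k. *)

Definition eps (j k l : 'I_3) : int :=
  match nat_of_ord j, nat_of_ord k, nat_of_ord l with
  | 0, 1, 2 | 1, 2, 0 | 2, 0, 1 => 1%:Z
  | 0, 2, 1 | 2, 1, 0 | 1, 0, 2 => - 1%:Z
  | _, _, _ => 0%:Z
  end.

Definition partial {R : realType} (k : 'I_3) (f : 'rV[R]_3 -> R) (x : 'rV[R]_3) : R :=
  'D_(delta_mx 0 k) f x.

Definition entry {R : realType} (Q : 'rV[R]_3 -> 'M[R]_3) (i j : 'I_3) : 'rV[R]_3 -> R :=
  fun x => Q x i j.

Definition C1 {R : realType} (Q : 'rV[R]_3 -> 'M[R]_3) : Prop :=
  forall i j : 'I_3,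
    (forall x, differentiable (entry Q i j) x) /\
    (forall k : 'I_3, continuous (partial k (entry Q i j))).

Definition SO3 {R : realType} (M : 'M[R]_3) : Prop :=
  M^T *m M = 1%:M /\ \det M = 1.

Definition curl {R : realType} (Q : 'rV[R]_3 -> 'M[R]_3) (x : 'rV[R]_3) : 'M[R]_3 :=
  \matrix_(i < 3, j < 3)
     \sum_(k < 3) \sum_(l < 3) (eps j k l)%:~R * partial k (entry Q i l) x.

(* Every entry of a rotation has modulus at most 1.  If two functions u, v
   bounded by M satisfy d_a v - d_b u = c, the flux H s = int_0^L v (s a + y b) dy
   is bounded by M L while H' s = c L + O(M); for L large the mean value theorem
   forces c = 0.  Applied to the rows of R this gives curl R = 0, that is
   d_k R_im = d_m R_ik.  Differentiating R^T R = 1 shows that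
   T_klm = (R^T d_k R)_lm is skew in (l, m); being also symmetric in (k, m) it
   vanishes, so every partial derivative of R is zero and R is constant. *)

From mathcomp Require Import all_boot all_order all_algebra.
From mathcomp Require Import all_classical all_reals all_analysis.
From mathcomp Require Import lra.
Set Implicit Arguments. Unset Strict Implicit. Unset Printing Implicit Defensive.
Import Order.TTheory GRing.Theory Num.Theory.
Import numFieldNormedType.Exports.
Local Open Scope ring_scope.

Section directional_derivatives.
Context {R : realType}.

Lemma is_derive_line {V : normedModType R} (f : V -> R) (a v : V) (t : R) :
  derivable f (a + t *: v) v ->
  is_derive t 1 (fun s => f (a + s *: v)) ('D_v f (a + t *: v)).
Proof.
move=> df.
have E : (fun h : R => h^-1 *: ((fun s => f (a + s *: v)) (h *: 1 + t)
                                  - f (a + t *: v))) =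
         (fun h => h^-1 *: (f (h *: v + (a + t *: v)) - f (a + t *: v))).
  by apply/funext => h; rewrite scalerDl [_%:A]mulr1 addrCA addrA.
by split; rewrite /derivable /derive /= E.
Qed.

Lemma derive_row_sum_delta n (f : 'rV[R]_n -> R) (x v : 'rV[R]_n) :
  differentiable f x ->
  'D_v f x = \sum_(k < n) v 0 k * 'D_(delta_mx 0 k) f x.
Proof.
move=> df; rewrite deriveE // {1}(row_sum_delta v) linear_sum.
by apply: eq_bigr => k _; rewrite linearZ deriveE.
Qed.

Lemma partials_eq0_const n (f : 'rV[R]_n -> R) :
  (forall x, differentiable f x) ->
  (forall k x, 'D_(delta_mx 0 k) f x = 0) ->
  forall x y, f x = f y.
Proof.
move=> df p0 x y.
have D0 (t : R) : is_derive t 1 (fun s => f (x + s *: (y - x))) 0.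
  have := is_derive_line (diff_derivable (df (x + t *: (y - x)))).
  by rewrite derive_row_sum_delta // big1 // => k _; rewrite p0 mulr0.
have := is_derive_0_is_cst 0 1 D0.
by rewrite scale0r scale1r addr0 addrC subrK.
Qed.

End directional_derivatives.

Lemma sym_skew_tensor_eq0 {F : realFieldType} {I : Type} (T : I -> I -> I -> F) :
  (forall k l m, T k l m = - T k m l) -> (forall k l m, T k l m = T m l k) ->
  forall k l m, T k l m = 0.
Proof.
move=> skew sym k l m.
(* T klm = -T kml = -T lmk = T lkm = T mkl = -T mlk = -T klm *)
have := skew k l m; have := sym k m l; have := skew l m k.
have := sym l k m; have := skew m k l; have := sym m l k.
lra.
Qed.

Section orthogonal_matrices.
Context {R : realType}.

Lemma orthomx_entry_le1 n (M : 'M[R]_n) i j : M^T *m M = 1%:M -> `|M i j| <= 1.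
Proof.
move=> MTM.
have col1 : \sum_(k < n) M k j ^+ 2 = 1.
  transitivity ((M^T *m M) j j); last by rewrite MTM mxE eqxx.
  by rewrite mxE; apply: eq_bigr => k _; rewrite mxE expr2.
rewrite (bigD1 i) //= in col1.
have rest : 0 <= \sum_(k < n | k != i) M k j ^+ 2.
  by apply: sumr_ge0 => k _; exact: sqr_ge0.
by rewrite ler_norml; apply/andP; split; nra.
Qed.

Lemma derive_orthomx_skew {V : normedModType R} n (Q : V -> 'M[R]_n) (v x : V) l m :
  (forall i j, differentiable (fun y => Q y i j) x) ->
  (forall y, (Q y)^T *m Q y = 1%:M) ->
  \sum_i Q x i l * 'D_v (fun y => Q y i m) x =
    - \sum_i Q x i m * 'D_v (fun y => Q y i l) x.
Proof.
move=> dQ QTQ; apply/eqP; rewrite -addr_eq0 -big_split /=.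
pose g := \sum_i ((fun y => Q y i l) * (fun y => Q y i m) : V -> R).
have dg : is_derive x v g
    (\sum_i (Q x i l * 'D_v (fun y => Q y i m) x + Q x i m * 'D_v (fun y => Q y i l) x)).
  by apply: is_derive_sum => i; apply: is_deriveM; exact/derivableP/diff_derivable.
have gE : g = cst ((1%:M : 'M[R]_n) l m).
  rewrite /g fct_sumE; apply/funext => y; rewrite /cst -(QTQ y) mxE.
  by apply: eq_bigr => i _; rewrite mxE.
by rewrite gE in dg; rewrite -(@derive_val _ _ _ _ _ _ _ dg) derive_cst.
Qed.

Lemma orthomx_sym_derive_eq0 n (Q : 'rV[R]_n -> 'M[R]_n) (x : 'rV[R]_n) :
  (forall i j, differentiable (fun y => Q y i j) x) ->
  (forall y, (Q y)^T *m Q y = 1%:M) ->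
  (forall i k m, 'D_(delta_mx 0 k) (fun y => Q y i m) x =
                 'D_(delta_mx 0 m) (fun y => Q y i k) x) ->
  forall i k m, 'D_(delta_mx 0 k) (fun y => Q y i m) x = 0.
Proof.
move=> dQ QTQ sym i k m.
pose D k := \matrix_(i, m) 'D_(delta_mx 0 k) (fun y => Q y i m) x.
pose T k l m := \sum_i Q x i l * 'D_(delta_mx 0 k) (fun y => Q y i m) x.
have T0 a b c : T a b c = 0.
  apply: sym_skew_tensor_eq0 => [{}a {}b {}c|{}a {}b {}c].
    exact: derive_orthomx_skew.
  by apply: eq_bigr => i' _; rewrite sym.
have QTD0 : (Q x)^T *m D k = 0.
  apply/matrixP => l m'; rewrite !mxE -[RHS](T0 k l m').
  by apply: eq_bigr => i' _; rewrite !mxE.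
have QQT : Q x *m (Q x)^T = 1%:M by apply: mulmx1C.
have : D k = 0 by rewrite -[D k]mul1mx -QQT -mulmxA QTD0 mulmx0.
by move/matrixP => /(_ i m); rewrite !mxE.
Qed.
End orthogonal_matrices.

Section bounded_curl.
Context {R : realType}.
Notation mu := (@lebesgue_measure R).

Lemma continuous_compact_norm_le {T : topologicalType} (f : T -> R) (K : set T) :
  compact K -> continuous f -> exists M, forall p, K p -> `|f p| <= M.
Proof.
move=> cK cf.
have [M [Mr MK]] := compact_bounded (continuous_compact (continuous_subspaceT cf) cK).
exists (`|M| + 1) => p Kp; apply: MK; last by exists p.
by rewrite (le_lt_trans (real_ler_norm Mr)) // ltrDl.
Qed.

Lemma continuous_itv_integrable (f : R -> R) (a b : R) :
  continuous f -> mu.-integrable `[a, b] (EFin \o f).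
Proof.
move=> cf; apply: continuous_compact_integrable; first exact: segment_compact.
exact: continuous_subspaceT.
Qed.

Lemma norm_Rintegral_itv_le (f : R -> R) (a b M : R) : a < b -> continuous f ->
  (forall y, `|f y| <= M) -> `|\int[mu]_(y in `[a, b]) f y| <= M * (b - a).
Proof.
move=> ab cf fM.
apply: (le_trans (le_normr_Rintegral _ (continuous_itv_integrable _ _ cf))) => //.
have cnf : continuous (fun y => `|f y|).
  by move=> y; apply: continuous_comp; [exact: cf | exact: norm_continuous].
have cM : continuous (cst M : R -> R) by exact: cst_continuous.
have inf := continuous_itv_integrable a b cnf.
have iM := continuous_itv_integrable a b cM.
apply: (le_trans (le_Rintegral _ inf iM _)) => //.
have muE := lebesgue_measure_itv `[a, b].
by rewrite Rintegral_cst //= muE /= lte_fin ab.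
Qed.

Lemma is_derive1_continuous (U DU : R -> R) :
  (forall y : R, is_derive y 1 U (DU y)) -> continuous U.
Proof.
move=> dU y; apply/differentiable_continuous/derivable1_diffP.
by case: (dU y).
Qed.

Lemma Rintegral_itv_is_derive (U DU : R -> R) (a b : R) : a < b ->
  (forall y : R, is_derive y 1 U (DU y)) -> continuous DU ->
  \int[mu]_(y in `[a, b]) DU y = U b - U a.
Proof.
move=> ab dU cDU; have cU := is_derive1_continuous dU.
rewrite /Rintegral (@continuous_FTC2 _ _ U _ _ ab (continuous_subspaceT cDU)) -?EFinB //.
- split; first by move=> y _; case: (dU y).
  + exact/cvg_at_right_filter/cU.
  + exact/cvg_at_left_filter/cU.
- by move=> y _; rewrite derive1E; case: (dU y).
Qed.

Lemma is_derive_Rintegral_param (V DV : R -> R -> R) (a b s : R) :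
  (forall s y : R, is_derive s 1 (V^~ y) (DV s y)) ->
  continuous (fun p : R * R => DV p.1 p.2) ->
  (forall s, continuous (V s)) ->
  is_derive s 1 (fun s => \int[mu]_(y in `[a, b]) V s y)
                (\int[mu]_(y in `[a, b]) DV s y).
Proof.
move=> dV cDV cV.
have [M DVM] : exists M, forall p, (`[s - 1, s + 1] `*` `[a, b])%classic p ->
    `|DV p.1 p.2| <= M.
  apply: continuous_compact_norm_le cDV.
  by apply: compact_setX; exact: segment_compact.
have d1E x y : partial1of2 V x y = DV x y.
  by rewrite /partial1of2 derive1E; case: (dV x y).
have Is : `]s - 1, s + 1[%classic s by rewrite /= in_itv /= ltrBlDr ltrDl ltr01.
have intV x : `]s - 1, s + 1[%classic x -> mu.-integrable `[a, b] (EFin \o V x).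
  by move=> _; exact: continuous_itv_integrable.
have derV x y : `]s - 1, s + 1[%classic x -> `[a, b]%classic y -> derivable (V^~ y) x 1.
  by move=> _ _; case: (dV x y).
have intM : mu.-integrable `[a, b] (EFin \o cst `|M|).
  by apply: continuous_itv_integrable; exact: cst_continuous.
have DV_M x y : `]s - 1, s + 1[%classic x -> `[a, b]%classic y ->
    `|partial1of2 V x y| <= cst `|M| y.
  move=> Ix Iy; rewrite d1E (le_trans _ (ler_norm M)) // (DVM (x, y)) //.
  by split=> //; apply: subset_itv_oo_cc.
have DV_ge0 (y : R) : 0 <= cst `|M| y by exact: normr_ge0.
have <- : 'D_1 (fun s => \int[mu]_(y in `[a, b]) V s y) s =
          \int[mu]_(y in `[a, b]) DV s y.
  rewrite -derive1E (@differentiation_under_integral _ _ _ mu _ _ (measurable_itv _)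
    _ _ _ Is intV derV _ DV_ge0 intM DV_M).
  by apply: eq_Rintegral => y _; rewrite d1E.
exact: derivableP (@derivable_under_integral _ _ _ mu _ _ (measurable_itv _)
  _ _ _ Is intV derV _ DV_ge0 intM DV_M).
Qed.

Lemma bounded_planar_curl_const_eq0 (U V DU DV : R -> R -> R) (M c : R) :
  (forall s y : R, is_derive s 1 (V^~ y) (DV s y)) ->
  (forall s y : R, is_derive y 1 (U s) (DU s y)) ->
  continuous (fun p : R * R => DV p.1 p.2) ->
  (forall s, continuous (DU s)) -> (forall s, continuous (V s)) ->
  (forall s y, `|U s y| <= M) -> (forall s y, `|V s y| <= M) ->
  (forall s y, DV s y - DU s y = c) -> c = 0.
Proof.
move=> dV dU cDV cDU cV UM VM curl_c.
have [//|c0] := eqVneq c 0; exfalso.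
have M0 : 0 <= M := le_trans (normr_ge0 _) (UM 0 0).
(* With this L, |H (L + 1) - H 0| <= 2 M L but |H'| >= 2 M + 1 on [0, L + 1]. *)
pose L := (4 * M + 1) / `|c|.
have L0 : 0 < L by rewrite divr_gt0 ?normr_gt0 //; lra.
have cL : `|c * L| = 4 * M + 1.
  by rewrite normrM (gtr0_norm L0) /L mulrCA divff ?normr_eq0 // mulr1.
pose H s := \int[mu]_(y in `[0, L]) V s y.
have dH (s : R) : is_derive s 1 H (c * L + (U s L - U s 0)).
  have <- : \int[mu]_(y in `[0, L]) DV s y = c * L + (U s L - U s 0).
    transitivity (\int[mu]_(y in `[0, L]) (c + DU s y)).
      by apply: eq_Rintegral => y _; rewrite -(curl_c s y) subrK.
    rewrite RintegralD //; last 2 first.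
    - by apply: continuous_itv_integrable; exact: cst_continuous.
    - exact: continuous_itv_integrable.
    have muE := lebesgue_measure_itv `[0, L].
    rewrite Rintegral_cst //= muE /= lte_fin L0 /= oppr0 addr0.
    by rewrite (Rintegral_itv_is_derive L0).
  exact: is_derive_Rintegral_param.
have L1 : 0 < L + 1 by lra.
have [xi _ dHxi] := MVT L1 (fun x _ => dH x)
  (continuous_subspaceT (is_derive1_continuous dH)).
have HL1 := norm_Rintegral_itv_le L0 (cV (L + 1)) (VM (L + 1)).
have H0 := norm_Rintegral_itv_le L0 (cV 0) (VM 0).
have dH_ge : 2 * M + 1 <= `|c * L + (U xi L - U xi 0)|.
  have := ler_normB (c * L + (U xi L - U xi 0)) (U xi L - U xi 0).
  have := ler_normB (U xi L) (U xi 0); have := UM xi L; have := UM xi 0.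
  by rewrite addrK cL; lra.
have := ler_normB (H (L + 1)) (H 0); rewrite dHxi subr0 normrM (gtr0_norm L1).
rewrite -/(H (L + 1)) -/(H 0) subr0 in HL1 H0.
nra.
Qed.

Lemma bounded_curl_const_eq0 {W : normedModType R} (u v : W -> R) (a b : W) (M c : R) :
  (forall x, differentiable u x) -> (forall x, differentiable v x) ->
  continuous ('D_a v) -> continuous ('D_b u) ->
  (forall x, `|u x| <= M) -> (forall x, `|v x| <= M) ->
  (forall x, 'D_a v x - 'D_b u x = c) -> c = 0.
Proof.
move=> du dv cDv cDu uM vM curl_c.
pose plane (s y : R) := s *: a + y *: b.
have cplane : continuous (fun p : R * R => plane p.1 p.2).
  move=> p; apply: (@continuousD _ _ _ (fun p : R * R => p.1 *: a) (fun p => p.2 *: b)).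
    by apply: continuousZr_tmp; exact: cvg_fst.
  by apply: continuousZr_tmp; exact: cvg_snd.
have cline (s : R) : continuous (plane s).
  move=> y; apply: (@continuousD _ _ _ (fun=> s *: a) (fun y : R => y *: b)).
    exact: cvg_cst.
  by apply: continuousZr_tmp; exact: cvg_id.
apply: (@bounded_planar_curl_const_eq0
   (fun s y => u (plane s y)) (fun s y => v (plane s y))
   (fun s y => 'D_b u (plane s y)) (fun s y => 'D_a v (plane s y)) M) => //.
- move=> s y; rewrite /plane addrC.
  have -> : (fun s => v (s *: a + y *: b)) = (fun s => v (y *: b + s *: a)).
    by apply/funext => s'; rewrite addrC.
  exact: is_derive_line (diff_derivable (dv _)).
- by move=> s y; exact: is_derive_line (diff_derivable (du _)).
- by move=> p; exact: (continuous_comp (cplane p) (cDv _)).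
- by move=> s y; exact: (continuous_comp (cline s y) (cDu _)).
- move=> s y; apply: (continuous_comp (cline s y)).
  exact: differentiable_continuous.
Qed.

End bounded_curl.

Section curl.
Context {R : realType}.

Lemma sum_ord3 (F : 'I_3 -> R) : \sum_(k < 3) F k = F 0 + F 1 + F 2.
Proof.
by rewrite !big_ord_recr big_ord0 /= add0r; congr (F _ + F _ + F _); exact: val_inj.
Qed.

Lemma eps_contractE (F : 'I_3 -> 'I_3 -> R) :
  [/\ \sum_(k < 3) \sum_(l < 3) (eps 0 k l)%:~R * F k l = F 1 2 - F 2 1,
      \sum_(k < 3) \sum_(l < 3) (eps 1 k l)%:~R * F k l = F 2 0 - F 0 2 &
      \sum_(k < 3) \sum_(l < 3) (eps 2 k l)%:~R * F k l = F 0 1 - F 1 0].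
Proof. by rewrite !sum_ord3 /eps /= !(mulr0z, mulr1z, mulrN1z); split; lra. Qed.

Lemma curl_mxE (Q : 'rV[R]_3 -> 'M[R]_3) x i :
  [/\ curl Q x i 0 = partial 1 (entry Q i 2) x - partial 2 (entry Q i 1) x,
      curl Q x i 1 = partial 2 (entry Q i 0) x - partial 0 (entry Q i 2) x &
      curl Q x i 2 = partial 0 (entry Q i 1) x - partial 1 (entry Q i 0) x].
Proof.
by rewrite !mxE; exact: (eps_contractE (fun k l => partial k (entry Q i l) x)).
Qed.

Lemma ord3P (j : 'I_3) : [\/ j = 0, j = 1 | j = 2].
Proof.
case: j => -[|[|[|//]]] j3; [constructor 1 | constructor 2 | constructor 3];
  exact: val_inj.
Qed.

Lemma ord3_sym (F : 'I_3 -> 'I_3 -> R) :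
  F 1 2 = F 2 1 -> F 2 0 = F 0 2 -> F 0 1 = F 1 0 -> forall k m, F k m = F m k.
Proof. by move=> h12 h20 h01 k m; case: (ord3P k) => ->; case: (ord3P m) => ->. Qed.

Lemma curl_eq0_partial_sym (Q : 'rV[R]_3 -> 'M[R]_3) x :
  curl Q x = 0 ->
  forall i k m, partial k (entry Q i m) x = partial m (entry Q i k) x.
Proof.
move=> curl0 i; have [] := curl_mxE Q x i; rewrite curl0 !mxE => c0 c1 c2.
apply: (ord3_sym (F := fun k m => partial k (entry Q i m) x)); lra.
Qed.

End curl.

Theorem theorem4p1 (R : realType) (Q : 'rV[R]_3 -> 'M[R]_3) (alpha : 'M[R]_3) :
  C1 Q ->
  (forall x, SO3 (Q x)) ->
  (forall x, curl Q x = alpha) ->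
  alpha = 0 /\ (exists Q0 : 'M[R]_3, forall x, Q x = Q0).
Proof.
move=> QC1 QSO3 curlQ.
have dQ i j x : differentiable (entry Q i j) x := proj1 (QC1 i j) x.
have QTQ x : (Q x)^T *m Q x = 1%:M := proj1 (QSO3 x).
have alpha0 : alpha = 0.
  apply/matrixP => i j; rewrite mxE.
  have curl_const_eq0 k l j' :
      (forall x, partial k (entry Q i l) x - partial l (entry Q i k) x = alpha i j') ->
      alpha i j' = 0.
    apply: (bounded_curl_const_eq0 (u := entry Q i k) (v := entry Q i l)
              (a := delta_mx 0 k) (b := delta_mx 0 l) (M := 1)) => //.
    - exact: (proj2 (QC1 i l)).
    - exact: (proj2 (QC1 i k)).
    - by move=> x; exact: orthomx_entry_le1.
    - by move=> x; exact: orthomx_entry_le1.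
  case: (ord3P j) => ->;
    [apply: (curl_const_eq0 1 2) | apply: (curl_const_eq0 2 0)
    | apply: (curl_const_eq0 0 1)];
    by move=> x; case: (curl_mxE Q x i) => e0 e1 e2; rewrite -(curlQ x) ?e0 ?e1 ?e2.
split=> //; exists (Q 0) => x; apply/matrixP => i j.
apply: (partials_eq0_const (f := entry Q i j)) => // k y.
apply: (orthomx_sym_derive_eq0 (fun i j => dQ i j y) QTQ).
by apply: curl_eq0_partial_sym; rewrite curlQ.
Qed.
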